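(* The left ideals $I_H,I_V,I_D$ of $\mathbb Z[\Gamma^2]$ are finitely generated, namely $I_H=\langle (1+S,1),\,(1+U+U^2,1),\,(1,1-T)\rangle$, $I_V=\langle (1,1+S),\,(1,1+U+U^2),\,(1-US,1)\rangle$, and $I_D=\langle (1,1)+(S,S),\,(1,1)+(U,U)+(U^2,U^2)\rangle$.
   Context: $\Gamma=PSL_2(\mathbb Z)$ acting on $\mathbb P^1(\mathbb Q)$; $S=\pm\begin{pmatrix}0&-1\\1&0\end{pmatrix}$, $U=\pm\begin{pmatrix}0&1\\-1&1\end{pmatrix}$, $T=\pm\begin{pmatrix}1&1\\0&1\end{pmatrix}$, so $US=\pm\begin{pmatrix}1&0\\1&1\end{pmatrix}$. Identify $\mathbb Z[\Gamma^2]=\mathbb Z[\Gamma]\otimes\mathbb Z[\Gamma]$, writing $(a,b)=a\otimes b$; $\langle\cdots\rangle$ means the left ideal generated. Let $\Gamma_\infty=\{T^n\}$, $\Gamma_0=\{(US)^n\}$, and for $\gamma\in\Gamma$ let $\partial\gamma=[\gamma\infty]-[\gamma0]\in\mathbb Z[\mathbb P^1(\mathbb Q)]$. For $\sum_i\lambda_i(\alpha_i,\beta_i)\in\mathbb Z[\Gamma^2]$ with distinct pairs: it lies in $I_H$ iff $\sum_{i:\beta_i\in C}\lambda_i\partial\alpha_i=0$ for every $C\in\Gamma/\Gamma_\infty$; in $I_V$ iff $\sum_{i:\alpha_i\in C}\lambda_i\partial\beta_i=0$ for every $C\in\Gamma/\Gamma_0$; in $I_D$ iff $\sum_{i:\beta_i\alpha_i^{-1}=g}\lambda_i\partial\alpha_i=0$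 for every $g\in\Gamma$. *)

From HB Require Import structures.
From mathcomp Require Import all_boot all_order all_algebra.
From Stdlib Require Import ClassicalEpsilon.
Set Implicit Arguments. Unset Strict Implicit. Unset Printing Implicit Defensive.
Import Order.TTheory GRing.Theory Num.Theory.
Local Open Scope ring_scope.

(* A 2x2 integer matrix (a,b,c,d) = [[a,b],[c,d]]. *)
Definition mat := (int * int * int * int)%type.
Definition mdet (m : mat) : int := let: (a, b, c, d) := m in a * d - b * c.
(* canonical representative of the class {m, -m}: (c > 0) or (c = 0 and d > 0) *)
Definition mnormb (m : mat) : bool :=
  let: (a, b, c, d) := m in (0 < c) || ((c == 0) && (0 < d)).
Definition mneg (m : mat) : mat := let: (a, b, c, d) := m in (- a, - b, - c, - d).
Definition mnormalize (m : mat) : mat := if mnormb m then m else mneg m.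
Definition mmul (m n : mat) : mat :=
  let: (a, b, c, d) := m in let: (a', b', c', d') := n in
  (a * a' + b * c', a * b' + b * d', c * a' + d * c', c * b' + d * d').
Definition madj (m : mat) : mat := let: (a, b, c, d) := m in (d, - b, - c, a).

Definition pslb (m : mat) : bool := (mdet m == 1) && mnormb m.
(* PSL_2(Z): elements are +-classes of determinant-1 integer matrices,
   represented by their unique normalized representative. *)
Definition PSL2Z := {m : mat | pslb m}.

Definition pone : PSL2Z := exist pslb (1, 0, 0, 1) isT.
Definition pmul (g h : PSL2Z) : PSL2Z := insubd pone (mnormalize (mmul (val g) (val h))).
Definition pinv (g : PSL2Z) : PSL2Z := insubd pone (mnormalize (madj (val g))).
Definition pmat (m : mat) : PSL2Z := insubd pone (mnormalize m).

Fixpoint pexpn (g : PSL2Z) (n : nat) : PSL2Z :=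
  match n with 0%N => pone | k.+1 => pmul g (pexpn g k) end.
Definition pexpz (g : PSL2Z) (n : int) : PSL2Z :=
  match n with Posz k => pexpn g k | Negz k => pexpn (pinv g) k.+1 end.

Definition Smat : PSL2Z := pmat (0, -1, 1, 0).
Definition Umat : PSL2Z := pmat (0, 1, -1, 1).
Definition Tmat : PSL2Z := pmat (1, 1, 0, 1).
Definition USmat : PSL2Z := pmul Umat Smat.   (* = +-[[1,0],[1,1]] *)

Definition propb (P : Prop) : bool :=
  if excluded_middle_informative P then true else false.
Definition inGinf (g : PSL2Z) : bool := propb (exists n : int, g = pexpz Tmat n).
Definition inG0 (g : PSL2Z) : bool := propb (exists n : int, g = pexpz USmat n).

Definition P1Q := option rat.   (* None = oo *)
(* gamma oo = a/c, gamma 0 = b/d (independent of the sign of the representative) *)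
Definition act_inf (g : PSL2Z) : P1Q :=
  let: (a, b, c, d) := val g in if c == 0 then None else Some (a%:Q / c%:Q).
Definition act_zero (g : PSL2Z) : P1Q :=
  let: (a, b, c, d) := val g in if d == 0 then None else Some (b%:Q / d%:Q).
(* coefficient of the point x in  partial g = [g oo] - [g 0]  in Z[P^1(Q)] *)
Definition bdry (g : PSL2Z) (x : P1Q) : int := (act_inf g == x)%:Z - (act_zero g == x)%:Z.

(* An element is a formal finite sum sum_i lambda_i (alpha_i, beta_i), given as a list;
   two lists represent the same element iff they have the same coefficients. *)
Definition G2 := (PSL2Z * PSL2Z)%type.
Definition ZG2 := seq (int * G2).
Definition coef (l : ZG2) (x : G2) : int := \sum_(e <- l | e.2 == x) e.1.
Definition zg_eq (l l' : ZG2) : Prop := forall x, coef l x = coef l' x.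
Definition zg_mul (r s : ZG2) : ZG2 :=
  [seq (e.1 * f.1, (pmul e.2.1 f.2.1, pmul e.2.2 f.2.2)) | e <- r, f <- s].
Definition zg_gen (a b : PSL2Z) : ZG2 := [:: (1, (a, b))].
Definition in_left_ideal (gs : seq ZG2) (l : ZG2) : Prop :=
  exists rs : seq ZG2, size rs = size gs /\
    zg_eq l (flatten [seq zg_mul p.1 p.2 | p <- zip rs gs]).

Definition in_IH (l : ZG2) : Prop :=
  forall (C : PSL2Z) (x : P1Q),   (* coset C Gamma_infty *)
    \sum_(e <- l | inGinf (pmul (pinv C) e.2.2)) e.1 * bdry e.2.1 x = 0.
Definition in_IV (l : ZG2) : Prop :=
  forall (C : PSL2Z) (x : P1Q),   (* coset C Gamma_0 *)
    \sum_(e <- l | inG0 (pmul (pinv C) e.2.1)) e.1 * bdry e.2.2 x = 0.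
Definition in_ID (l : ZG2) : Prop :=
  forall (g : PSL2Z) (x : P1Q),
    \sum_(e <- l | pmul e.2.2 (pinv e.2.1) == g) e.1 * bdry e.2.1 x = 0.

Definition U2 := pmul Umat Umat.
Definition genH : seq ZG2 :=
  [:: zg_gen pone pone ++ zg_gen Smat pone;
      zg_gen pone pone ++ zg_gen Umat pone ++ zg_gen U2 pone;
      [:: (1, (pone, pone)); (-1, (pone, Tmat))]].
Definition genV : seq ZG2 :=
  [:: zg_gen pone pone ++ zg_gen pone Smat;
      zg_gen pone pone ++ zg_gen pone Umat ++ zg_gen pone U2;
      [:: (1, (pone, pone)); (-1, (USmat, pone))]].
Definition genD : seq ZG2 :=
  [:: zg_gen pone pone ++ zg_gen Smat Smat;
      zg_gen pone pone ++ zg_gen Umat Umat ++ zg_gen U2 U2].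

(* The generators lie in the ideals because S exchanges 0 and ∞ and U permutes
   ∞ → 0 → 1 → ∞, so that ∂g + ∂(gS) = 0 and ∂g + ∂(gU) + ∂(gU²) = 0, while T fixes ∞
   and US fixes 0.

   Conversely, let E : Γ → Z[Γ²] satisfy E g + E (gS) ≡ 0 and E g + E (gU) + E (gU²) ≡ 0
   modulo a left ideal.  Every rational r = p/q is [gam r] ∞ for a unique matrix
   [gam r] = (p b; q d) with 0 ≤ d < q, and its Farey parent [gam r] 0 = b/d has a smaller
   denominator.  Summing E along the Farey path from ∞ gives ψ with ψ ∞ = 0 and
   ψ r = ψ (parent r) + E (gam r), and an induction on |c| + |d| (a continued fraction
   expansion) shows E g ≡ ψ (g ∞) - ψ (g 0) for every g.  For I_H take E g = (g, β) with β
   a fixed representative of a coset of Γ_∞, which the generator (1, 1 - T) lets us move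
   along its coset; I_V and I_D are similar.  An element of the ideal is then congruent
   to a combination of the ψ x whose coefficients are exactly the coset sums required to
   vanish. *)

From mathcomp Require Import all_boot all_order all_algebra ring zify.
From Stdlib Require Import ClassicalEpsilon.
Set Implicit Arguments. Unset Strict Implicit. Unset Printing Implicit Defensive.
Import Order.TTheory GRing.Theory Num.Theory.
Local Open Scope ring_scope.

Implicit Types (m : mat) (g h C : PSL2Z).

(** * PSL_2(Z) as normalized integer matrices *)

Lemma mulz_eq1 (a d : int) : a * d = 1 -> (a = 1 /\ d = 1) \/ (a = -1 /\ d = -1).
Proof.
move=> H; have : (`|a| * `|d| = 1)%N by rewrite -abszM H.
move/eqP; rewrite muln_eq1 => /andP [/eqP Ha /eqP Hd].
have [ea|ea] : a = 1 \/ a = -1 by lia.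
all: have [ed|ed] : d = 1 \/ d = -1 by lia.
all: subst; move: H; rewrite ?mulr1 ?mulrN1 ?mulN1r; lia.
Qed.

Lemma mdetN m : mdet (mneg m) = mdet m.
Proof. by case: m => [[[a b] c] d] /=; ring. Qed.

Lemma mnegK m : mneg (mneg m) = m.
Proof. by case: m => [[[a b] c] d] /=; rewrite !opprK. Qed.

Lemma mnormbN m : mdet m = 1 -> mnormb (mneg m) = ~~ mnormb m.
Proof.
case: m => [[[a b] c] d] /=.
have [->|c0] := eqVneq c 0; last by lia.
have [->|d0] := eqVneq d 0; last by lia.
by rewrite !mulr0 subrr.
Qed.

Lemma mdetM (m n : mat) : mdet (mmul m n) = mdet m * mdet n.
Proof. by case: m => [[[a b] c] d]; case: n => [[[a' b'] c'] d'] /=; ring. Qed.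

Lemma mdet_adj m : mdet (madj m) = mdet m.
Proof. by case: m => [[[a b] c] d] /=; ring. Qed.

Lemma mmulNl (m n : mat) : mmul (mneg m) n = mneg (mmul m n).
Proof. by case: m => [[[a b] c] d]; case: n => [[[a' b'] c'] d'] /=; congr (_,_,_,_); ring. Qed.

Lemma mmulNr (m n : mat) : mmul m (mneg n) = mneg (mmul m n).
Proof. by case: m => [[[a b] c] d]; case: n => [[[a' b'] c'] d'] /=; congr (_,_,_,_); ring. Qed.

Lemma madjN m : madj (mneg m) = mneg (madj m).
Proof. by case: m => [[[a b] c] d]. Qed.

Lemma mmulA (m n p : mat) : mmul m (mmul n p) = mmul (mmul m n) p.
Proof.
case: m => [[[a b] c] d]; case: n => [[[a' b'] c'] d']; case: p => [[[a'' b''] c''] d''] /=.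
by congr (_,_,_,_); ring.
Qed.

Lemma mmul1m m : mmul (1, 0, 0, 1) m = m.
Proof. by case: m => [[[a b] c] d] /=; congr (_,_,_,_); ring. Qed.

Lemma mmulm1 m : mmul m (1, 0, 0, 1) = m.
Proof. by case: m => [[[a b] c] d] /=; congr (_,_,_,_); ring. Qed.

Lemma mmul_adjm m : mdet m = 1 -> mmul (madj m) m = (1, 0, 0, 1).
Proof. by case: m => [[[a b] c] d] /= D; congr (_,_,_,_); rewrite -?D; ring. Qed.

Lemma mmulm_adj m : mdet m = 1 -> mmul m (madj m) = (1, 0, 0, 1).
Proof. by case: m => [[[a b] c] d] /= D; congr (_,_,_,_); rewrite -?D; ring. Qed.

Lemma pslb_mnormalize m : mdet m = 1 -> pslb (mnormalize m).
Proof.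
move=> D; rewrite /pslb /mnormalize; case: ifPn => [-> | N]; first by rewrite D eqxx.
by rewrite mdetN D eqxx mnormbN.
Qed.

Lemma val_pmat m : mdet m = 1 -> val (pmat m) = mnormalize m.
Proof. by move=> D; rewrite /pmat insubdK //; exact: pslb_mnormalize. Qed.

Lemma mdet_val g : mdet (val g) = 1.
Proof. by have := valP g; rewrite /pslb => /andP [/eqP]. Qed.

Lemma pmat_val g : pmat (val g) = g.
Proof.
rewrite /pmat /mnormalize; have := valP g; rewrite /pslb => /andP [_ ->].
exact: valKd.
Qed.

Lemma pmatN m : pmat (mneg m) = pmat m.
Proof.
rewrite /pmat /mnormalize; case: (boolP (mnormb m)) => N.
  by rewrite ifN ?mnegK //; case: m N => [[[a b] c] d] /=; lia.
case: (boolP (mnormb (mneg m))) => N' //.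
by rewrite mnegK /insubd !insubF //; apply/negbTE; rewrite /pslb negb_and ?N ?N' orbT.
Qed.

Lemma pmat_eq (m n : mat) : mdet m = 1 -> mdet n = 1 -> pmat m = pmat n -> m = n \/ m = mneg n.
Proof.
move=> Dm Dn /(congr1 val); rewrite !val_pmat // /mnormalize.
case: ifP => _; case: ifP => _ E; rewrite -?E ?mnegK; auto.
by rewrite -(mnegK m) E mnegK; auto.
Qed.

Lemma pmat_ind (P : PSL2Z -> Prop) :
  (forall a b c d, a * d - b * c = 1 -> P (pmat (a, b, c, d))) -> forall g, P g.
Proof.
move=> IH g; rewrite -(pmat_val g); move: (mdet_val g).
by case: (val g) => [[[a b] c] d]; exact: IH.
Qed.

Lemma pmulE (m n : mat) : mdet m = 1 -> mdet n = 1 -> pmul (pmat m) (pmat n) = pmat (mmul m n).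
Proof.
move=> Dm Dn; rewrite /pmul (val_pmat Dm) (val_pmat Dn) -/(pmat _) /mnormalize.
by case: ifP => _; case: ifP => _; rewrite ?mmulNl ?mmulNr ?mnegK ?pmatN.
Qed.

Lemma pinvE m : mdet m = 1 -> pinv (pmat m) = pmat (madj m).
Proof.
move=> D; rewrite /pinv (val_pmat D) -/(pmat _) /mnormalize.
by case: ifP => _; rewrite ?madjN ?pmatN.
Qed.

Lemma pone_pmat : pone = pmat (1, 0, 0, 1).
Proof. by apply: val_inj; rewrite val_pmat. Qed.

Lemma pmulA g h (k : PSL2Z) : pmul g (pmul h k) = pmul (pmul g h) k.
Proof.
rewrite -(pmat_val g) -(pmat_val h) -(pmat_val k).
by rewrite !pmulE ?mdetM ?mdet_val ?mulr1 // mmulA.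
Qed.

Lemma pmul1g g : pmul pone g = g.
Proof. by rewrite -(pmat_val g) pone_pmat pmulE ?mdet_val // mmul1m. Qed.

Lemma pmulg1 g : pmul g pone = g.
Proof. by rewrite -(pmat_val g) pone_pmat pmulE ?mdet_val // mmulm1. Qed.

Lemma pmulVg g : pmul (pinv g) g = pone.
Proof.
rewrite -(pmat_val g) pinvE ?mdet_val // pmulE ?mdet_adj ?mdet_val //.
by rewrite mmul_adjm ?mdet_val // pone_pmat.
Qed.

Lemma pmulgV g : pmul g (pinv g) = pone.
Proof.
rewrite -(pmat_val g) pinvE ?mdet_val // pmulE ?mdet_adj ?mdet_val //.
by rewrite mmulm_adj ?mdet_val // pone_pmat.
Qed.

Lemma pinvM g h : pinv (pmul g h) = pmul (pinv h) (pinv g).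
Proof.
have E : pmul (pmul g h) (pmul (pinv h) (pinv g)) = pone.
  by rewrite pmulA -(pmulA g) pmulgV pmulg1 pmulgV.
by rewrite -[LHS]pmulg1 -E pmulA pmulVg pmul1g.
Qed.

Lemma pmulKV g h (k : PSL2Z) : pmul (pmul g h) (pinv (pmul k h)) = pmul g (pinv k).
Proof. by rewrite pinvM pmulA -(pmulA g) pmulgV pmulg1. Qed.

(** * The action on ∞, 0 and 1 *)

Definition mact_inf m : P1Q :=
  let: (a, b, c, d) := m in if c == 0 then None else Some (a%:Q / c%:Q).
Definition mact_zero m : P1Q :=
  let: (a, b, c, d) := m in if d == 0 then None else Some (b%:Q / d%:Q).
Definition mact_one m : P1Q :=
  let: (a, b, c, d) := m in if c + d == 0 then None else Some ((a + b)%:Q / (c + d)%:Q).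
Definition act_one g : P1Q := mact_one (val g).

Lemma fracNN (x z : int) : (- x)%:Q / (- z)%:Q = x%:Q / z%:Q.
Proof. by rewrite !rmorphN /= invrN mulrNN. Qed.

Lemma mact_infN m : mact_inf (mneg m) = mact_inf m.
Proof. by case: m => [[[a b] c] d] /=; rewrite oppr_eq0 fracNN. Qed.

Lemma mact_zeroN m : mact_zero (mneg m) = mact_zero m.
Proof. by case: m => [[[a b] c] d] /=; rewrite oppr_eq0 fracNN. Qed.

Lemma mact_oneN m : mact_one (mneg m) = mact_one m.
Proof. by case: m => [[[a b] c] d] /=; rewrite -!opprD oppr_eq0 fracNN. Qed.

Lemma act_inf_pmat m : mdet m = 1 -> act_inf (pmat m) = mact_inf m.
Proof.
move=> D; rewrite [act_inf _]/(mact_inf (val _)) val_pmat // /mnormalize.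
by case: ifP => // _; exact: mact_infN.
Qed.

Lemma act_zero_pmat m : mdet m = 1 -> act_zero (pmat m) = mact_zero m.
Proof.
move=> D; rewrite [act_zero _]/(mact_zero (val _)) val_pmat // /mnormalize.
by case: ifP => // _; exact: mact_zeroN.
Qed.

Lemma act_one_pmat m : mdet m = 1 -> act_one (pmat m) = mact_one m.
Proof.
move=> D; rewrite /act_one val_pmat // /mnormalize.
by case: ifP => // _; exact: mact_oneN.
Qed.

Lemma mdet_upper (x : int) : mdet (1, x, 0, 1) = 1.
Proof. by rewrite /=; ring. Qed.

Lemma mdet_lower (x : int) : mdet (1, 0, x, 1) = 1.
Proof. by rewrite /=; ring. Qed.

Lemma U2E : U2 = pmat (-1, 1, -1, 0).
Proof. by rewrite /U2 /Umat pmulE. Qed.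

Lemma USmatE : USmat = pmat (1, 0, 1, 1).
Proof. by rewrite /USmat /Umat /Smat pmulE. Qed.

Lemma mmulS a b c d : mmul (a, b, c, d) (0, -1, 1, 0) = (b, - a, d, - c).
Proof. by rewrite /=; congr (_,_,_,_); ring. Qed.

Lemma mmulU a b c d : mmul (a, b, c, d) (0, 1, -1, 1) = (- b, a + b, - d, c + d).
Proof. by rewrite /=; congr (_,_,_,_); ring. Qed.

Lemma mmulU2 a b c d : mmul (a, b, c, d) (-1, 1, -1, 0) = (- (a + b), a, - (c + d), c).
Proof. by rewrite /=; congr (_,_,_,_); ring. Qed.

Lemma mmulT a b c d : mmul (a, b, c, d) (1, 1, 0, 1) = (a, a + b, c, c + d).
Proof. by rewrite /=; congr (_,_,_,_); ring. Qed.

Lemma mmulUS a b c d : mmul (a, b, c, d) (1, 0, 1, 1) = (a + b, b, c + d, d).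
Proof. by rewrite /=; congr (_,_,_,_); ring. Qed.

Lemma pmul_pmat g m : mdet m = 1 -> pmul g (pmat m) = pmat (mmul (val g) m).
Proof. by move=> D; rewrite -{1}(pmat_val g) pmulE ?mdet_val. Qed.

Lemma mdet_mmul_val g m : mdet m = 1 -> mdet (mmul (val g) m) = 1.
Proof. by move=> D; rewrite mdetM mdet_val D mulr1. Qed.

Lemma act_inf_S g : act_inf (pmul g Smat) = act_zero g.
Proof.
rewrite /Smat pmul_pmat // act_inf_pmat; last exact: mdet_mmul_val.
by rewrite /act_zero; case: (val g) => [[[a b] c] d]; rewrite mmulS.
Qed.

Lemma act_zero_S g : act_zero (pmul g Smat) = act_inf g.
Proof.
rewrite /Smat pmul_pmat // act_zero_pmat; last exact: mdet_mmul_val.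
by rewrite /act_inf; case: (val g) => [[[a b] c] d]; rewrite mmulS /= oppr_eq0 fracNN.
Qed.

Lemma act_inf_U g : act_inf (pmul g Umat) = act_zero g.
Proof.
rewrite /Umat pmul_pmat // act_inf_pmat; last exact: mdet_mmul_val.
by rewrite /act_zero; case: (val g) => [[[a b] c] d]; rewrite mmulU /= oppr_eq0 fracNN.
Qed.

Lemma act_zero_U g : act_zero (pmul g Umat) = act_one g.
Proof.
rewrite /Umat pmul_pmat // act_zero_pmat; last exact: mdet_mmul_val.
by rewrite /act_one; case: (val g) => [[[a b] c] d]; rewrite mmulU.
Qed.

Lemma act_inf_U2 g : act_inf (pmul g U2) = act_one g.
Proof.
rewrite U2E pmul_pmat // act_inf_pmat; last exact: mdet_mmul_val.
by rewrite /act_one; case: (val g) => [[[a b] c] d]; rewrite mmulU2 /= oppr_eq0 fracNN.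
Qed.

Lemma act_zero_U2 g : act_zero (pmul g U2) = act_inf g.
Proof.
rewrite U2E pmul_pmat // act_zero_pmat; last exact: mdet_mmul_val.
by rewrite /act_inf; case: (val g) => [[[a b] c] d]; rewrite mmulU2.
Qed.

Lemma act_inf_T g : act_inf (pmul g Tmat) = act_inf g.
Proof.
rewrite /Tmat pmul_pmat // act_inf_pmat; last exact: mdet_mmul_val.
by rewrite /act_inf; case: (val g) => [[[a b] c] d]; rewrite mmulT.
Qed.

Lemma act_zero_US g : act_zero (pmul g USmat) = act_zero g.
Proof.
rewrite USmatE pmul_pmat // act_zero_pmat; last exact: mdet_mmul_val.
by rewrite /act_zero; case: (val g) => [[[a b] c] d]; rewrite mmulUS.
Qed.

Lemma bdry_S g x : bdry g x + bdry (pmul g Smat) x = 0.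
Proof. by rewrite /bdry act_inf_S act_zero_S; ring. Qed.

Lemma bdry_U g x : bdry g x + bdry (pmul g Umat) x + bdry (pmul g U2) x = 0.
Proof. by rewrite /bdry act_inf_U act_zero_U act_inf_U2 act_zero_U2; ring. Qed.

(** * Stabilizers of ∞ and 0 *)

Lemma propbP (P : Prop) : reflect P (propb P).
Proof. by rewrite /propb; case: excluded_middle_informative => H; constructor. Qed.

Lemma pexpn_upper (x : int) k : pexpn (pmat (1, x, 0, 1)) k = pmat (1, x * k%:Z, 0, 1).
Proof.
elim: k => [|k IH] /=; first by rewrite mulr0 pone_pmat.
by rewrite IH pmulE ?mdet_upper //= intS; congr pmat; congr (_,_,_,_); ring.
Qed.

Lemma pexpn_lower (x : int) k : pexpn (pmat (1, 0, x, 1)) k = pmat (1, 0, x * k%:Z, 1).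
Proof.
elim: k => [|k IH] /=; first by rewrite mulr0 pone_pmat.
by rewrite IH pmulE ?mdet_lower //= intS; congr pmat; congr (_,_,_,_); ring.
Qed.

Lemma pexpzT n : pexpz Tmat n = pmat (1, n, 0, 1).
Proof.
case: n => k; rewrite /pexpz; first by rewrite /Tmat pexpn_upper mul1r.
by rewrite /Tmat pinvE // [madj _]/= oppr0 pexpn_upper NegzE mulN1r.
Qed.

Lemma pexpzUS n : pexpz USmat n = pmat (1, 0, n, 1).
Proof.
case: n => k; rewrite /pexpz; first by rewrite USmatE pexpn_lower mul1r.
by rewrite USmatE pinvE // [madj _]/= oppr0 pexpn_lower NegzE mulN1r.
Qed.

Definition mb m : int := let: (_, b, _, _) := m in b.
Definition mc m : int := let: (_, _, c, _) := m in c.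

Lemma inGinf_pmat m : mdet m = 1 -> inGinf (pmat m) = (mc m == 0).
Proof.
case: m => [[[a b] c] d] /= D; apply/propbP/eqP.
  case=> n; rewrite pexpzT => /(@pmat_eq (a, b, c, d) _ D (mdet_upper n)).
  by case=> [[_ _ -> _] | [_ _ -> _]]; rewrite ?oppr0.
move=> c0; move: D; rewrite c0 mulr0 subr0 => /mulz_eq1 [[-> ->] | [-> ->]].
  by exists b; rewrite pexpzT.
by exists (- b); rewrite pexpzT -[RHS]pmatN /= !opprK oppr0.
Qed.

Lemma inG0_pmat m : mdet m = 1 -> inG0 (pmat m) = (mb m == 0).
Proof.
case: m => [[[a b] c] d] /= D; apply/propbP/eqP.
  case=> n; rewrite pexpzUS => /(@pmat_eq (a, b, c, d) _ D (mdet_lower n)).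
  by case=> [[_ -> _ _] | [_ -> _ _]]; rewrite ?oppr0.
move=> b0; move: D; rewrite b0 mul0r subr0 => /mulz_eq1 [[-> ->] | [-> ->]].
  by exists c; rewrite pexpzUS.
by exists (- c); rewrite pexpzUS -[RHS]pmatN /= !opprK oppr0.
Qed.

Lemma frac_eq (a c a' c' : int) : c != 0 -> c' != 0 ->
  (Some (a'%:Q / c'%:Q) == Some (a%:Q / c%:Q)) = (a' * c == a * c').
Proof.
move=> c0 c'0; rewrite (inj_eq (@Some_inj _)) eqr_div ?intr_eq0 //.
by rewrite -!rmorphM /= eqr_int.
Qed.

Lemma mact_inf_eq (a b c d a' b' c' d' : int) : a * d - b * c = 1 -> a' * d' - b' * c' = 1 ->
  (mact_inf (a', b', c', d') == mact_inf (a, b, c, d)) = (a * c' == c * a').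
Proof.
move=> D D' /=.
have [c0 | c0] := eqVneq c 0; have [c'0 | c'0] := eqVneq c' 0;
  rewrite ?c0 ?c'0 ?eqxx ?(negbTE c0) ?(negbTE c'0).
- by rewrite mulr0 mul0r.
- rewrite mul0r (mulf_eq0 a c') (negbTE c'0) orbF; apply/idP/eqP => // a0.
  by move: D; rewrite a0 c0; lia.
- rewrite mulr0 [0 == _]eq_sym (mulf_eq0 c a') (negbTE c0); apply/idP/eqP => // a0.
  by move: D'; rewrite a0 c'0; lia.
- by rewrite frac_eq //; apply/eqP/eqP; lia.
Qed.

Lemma mact_zero_eq (a b c d a' b' c' d' : int) : a * d - b * c = 1 -> a' * d' - b' * c' = 1 ->
  (mact_zero (a', b', c', d') == mact_zero (a, b, c, d)) = (d * b' == b * d').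
Proof.
move=> D D' /=.
have [d0 | d0] := eqVneq d 0; have [d'0 | d'0] := eqVneq d' 0;
  rewrite ?d0 ?d'0 ?eqxx ?(negbTE d0) ?(negbTE d'0).
- by rewrite mulr0 mul0r.
- rewrite mul0r [0 == _]eq_sym (mulf_eq0 b d') (negbTE d'0) orbF; apply/idP/eqP => // b0.
  by move: D; rewrite b0 d0; lia.
- rewrite mulr0 (mulf_eq0 d b') (negbTE d0); apply/idP/eqP => // b0.
  by move: D'; rewrite b0 d'0; lia.
- by rewrite frac_eq //; apply/eqP/eqP; lia.
Qed.

Lemma inGinf_coset C g : inGinf (pmul (pinv C) g) = (act_inf g == act_inf C).
Proof.
elim/pmat_ind: C => a b c d D; elim/pmat_ind: g => a' b' c' d' D'.
rewrite pinvE // pmulE ?mdet_adj // inGinf_pmat; last by rewrite mdetM mdet_adj /= D D'.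
by rewrite !act_inf_pmat // mact_inf_eq //=; apply/eqP/eqP; lia.
Qed.

Lemma inG0_coset C g : inG0 (pmul (pinv C) g) = (act_zero g == act_zero C).
Proof.
elim/pmat_ind: C => a b c d D; elim/pmat_ind: g => a' b' c' d' D'.
rewrite pinvE // pmulE ?mdet_adj // inG0_pmat; last by rewrite mdetM mdet_adj /= D D'.
by rewrite !act_zero_pmat // mact_zero_eq //=; apply/eqP/eqP; lia.
Qed.

Lemma coset_inf C g : act_inf g = act_inf C -> exists n, g = pmul C (pexpz Tmat n).
Proof.
move=> E; have /propbP [n En] : inGinf (pmul (pinv C) g) by rewrite inGinf_coset E.
by exists n; rewrite -En pmulA pmulgV pmul1g.
Qed.

Lemma coset_zero C g : act_zero g = act_zero C -> exists n, g = pmul C (pexpz USmat n).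
Proof.
move=> E; have /propbP [n En] : inG0 (pmul (pinv C) g) by rewrite inG0_coset E.
by exists n; rewrite -En pmulA pmulgV pmul1g.
Qed.

(** * The group ring and its left ideals *)

Definition zscale (k : int) (l : ZG2) : ZG2 := [seq (k * e.1, e.2) | e <- l].
Notation zopp := (zscale (-1)).

Lemma coefZG_nil x : coef [::] x = 0.
Proof. by rewrite /coef big_nil. Qed.

Lemma coefZG_cons e l x : coef (e :: l) x = (if e.2 == x then e.1 else 0) + coef l x.
Proof. by rewrite /coef big_cons; case: ifP; rewrite ?add0r. Qed.

Lemma coefZG_cat l l' x : coef (l ++ l') x = coef l x + coef l' x.
Proof. by rewrite /coef big_cat. Qed.

Lemma coefZG_scale k l x : coef (zscale k l) x = k * coef l x.
Proof.
elim: l => [|e l IH]; first by rewrite /= !coefZG_nil mulr0.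
by rewrite /= !coefZG_cons IH /=; case: ifP => _; ring.
Qed.

Lemma coefZG_flatten L x : coef (flatten L) x = \sum_(l <- L) coef l x.
Proof.
elim: L => [|l L IH]; first by rewrite big_nil coefZG_nil.
by rewrite /= coefZG_cat IH big_cons.
Qed.

Ltac zg_ring :=
  let x := fresh "x" in
  move=> x; rewrite ?(coefZG_cat, coefZG_scale, coefZG_nil, coefZG_cons, coefZG_flatten) /=; ring.

Lemma sum_coef (w : G2 -> int) (l : ZG2) (s : seq G2) :
  uniq s -> {subset [seq e.2 | e <- l] <= s} ->
  \sum_(e <- l) e.1 * w e.2 = \sum_(x <- s) coef l x * w x.
Proof.
move=> us; elim: l => [|e l IH] sub.
  by rewrite big_nil big1_seq // => x _; rewrite coefZG_nil mul0r.
rewrite big_cons IH; last by move=> y yl; apply: sub; rewrite /= inE yl orbT.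
have es : e.2 \in s by apply: sub; rewrite /= inE eqxx.
rewrite (bigD1_seq e.2) //= (bigD1_seq e.2 es us) /= coefZG_cons eqxx addrA mulrDl.
by congr (_ + _); apply: eq_bigr => x /negbTE nx; rewrite coefZG_cons eq_sym nx add0r.
Qed.

Lemma sum_zg_eq (w : G2 -> int) l l' : zg_eq l l' ->
  \sum_(e <- l) e.1 * w e.2 = \sum_(e <- l') e.1 * w e.2.
Proof.
move=> E; set s := undup ([seq e.2 | e <- l] ++ [seq e.2 | e <- l']).
rewrite (@sum_coef w l s) ?undup_uniq //; last by move=> y yl; rewrite mem_undup mem_cat yl.
rewrite (@sum_coef w l' s) ?undup_uniq //; last by move=> y yl; rewrite mem_undup mem_cat yl orbT.
by apply: eq_bigr => x _; rewrite E.
Qed.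

Lemma zg_mul_cat r r' l : zg_mul (r ++ r') l = zg_mul r l ++ zg_mul r' l.
Proof. by rewrite /zg_mul allpairs_cat. Qed.

Lemma zg_mul_scale k r l : zg_mul (zscale k r) l = zscale k (zg_mul r l).
Proof.
elim: r => [|e r IH] //=; rewrite /zg_mul /= -/(zg_mul r l) -/(zg_mul (zscale k r) l) IH.
rewrite /zscale map_cat -map_comp; congr (_ ++ _); apply: eq_map => f /=.
by rewrite mulrA.
Qed.

Definition lcomb (rs gs : seq ZG2) : ZG2 := flatten [seq zg_mul p.1 p.2 | p <- zip rs gs].

Section LeftIdeal.
Variable gs : seq ZG2.
Local Notation I := (in_left_ideal gs).

Lemma ideal0 : I [::].
Proof.
exists (nseq (size gs) [::]); split; first by rewrite size_nseq.
change (zg_eq [::] (lcomb (nseq (size gs) [::]) gs)).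
suff -> : lcomb (nseq (size gs) [::]) gs = [::] by [].
by elim: gs.
Qed.

Lemma lcomb_cat rs rs' : size rs = size gs -> size rs' = size gs ->
  zg_eq (lcomb [seq p.1 ++ p.2 | p <- zip rs rs'] gs) (lcomb rs gs ++ lcomb rs' gs).
Proof.
rewrite /lcomb; elim: gs rs rs' => [|g gs' IH] [|r rs] [|r' rs'] //= [s] [s'] x.
by rewrite coefZG_cat zg_mul_cat coefZG_cat (IH rs rs' s s' x) !coefZG_cat; ring.
Qed.

Lemma lcomb_scale k rs : zg_eq (lcomb [seq zscale k r | r <- rs] gs) (zscale k (lcomb rs gs)).
Proof.
rewrite /lcomb; elim: gs rs => [|g gs' IH] [|r rs] //= x.
by rewrite coefZG_cat zg_mul_scale (IH rs x) !coefZG_scale coefZG_cat; ring.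
Qed.

Lemma idealD l l' : I l -> I l' -> I (l ++ l').
Proof.
move=> [rs [s E]] [rs' [s' E']].
exists [seq p.1 ++ p.2 | p <- zip rs rs']; split; first by rewrite size_map size_zip s s' minnn.
by move=> x; rewrite (lcomb_cat s s') !coefZG_cat E E'.
Qed.

Lemma idealZ k l : I l -> I (zscale k l).
Proof.
move=> [rs [s E]]; exists [seq zscale k r | r <- rs]; split; first by rewrite size_map.
by move=> x; rewrite lcomb_scale !coefZG_scale E.
Qed.

Lemma ideal_eq l l' : zg_eq l l' -> I l -> I l'.
Proof. by move=> E [rs [s E']]; exists rs; split=> // x; rewrite -E E'. Qed.

Definition eqmod l l' := I (l ++ zopp l').

Lemma eqmod_zg l l' : zg_eq l l' -> eqmod l l'.
Proof.
by move=> E; apply: ideal_eq ideal0 => x; rewrite coefZG_cat coefZG_scale coefZG_nil E; ring.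
Qed.

Lemma eqmod_sym l l' : eqmod l l' -> eqmod l' l.
Proof. by move=> H; apply: ideal_eq (idealZ (-1) H); zg_ring. Qed.

Lemma eqmod_trans l2 l1 l3 : eqmod l1 l2 -> eqmod l2 l3 -> eqmod l1 l3.
Proof. by move=> H H'; apply: ideal_eq (idealD H H'); zg_ring. Qed.

Lemma eqmod_cat l1 l2 l3 l4 : eqmod l1 l2 -> eqmod l3 l4 -> eqmod (l1 ++ l3) (l2 ++ l4).
Proof. by move=> H H'; apply: ideal_eq (idealD H H'); zg_ring. Qed.

Lemma eqmod_scale k l l' : eqmod l l' -> eqmod (zscale k l) (zscale k l').
Proof. by move=> H; apply: ideal_eq (idealZ k H); zg_ring. Qed.

Lemma eqmod0 l : eqmod l [::] -> I l.
Proof. by move=> H; apply: ideal_eq H; zg_ring. Qed.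

End LeftIdeal.

(** * The Farey tree *)

Lemma coprime_det (a b c d : int) : a * d - b * c = 1 -> coprime `|a| `|c|.
Proof.
by move=> D; rewrite -coprimezE; apply/coprimezP; exists (d, - b) => /=; rewrite -D; ring.
Qed.

Lemma numq_frac (a c : int) : coprime `|a| `|c| -> 0 < c -> numq (a%:Q / c%:Q) = a.
Proof. by move=> co c0; rewrite coprimeq_num // gtr0_sg // mul1r. Qed.

Lemma denq_frac (a c : int) : coprime `|a| `|c| -> 0 < c -> denq (a%:Q / c%:Q) = c.
Proof. by move=> co c0; rewrite coprimeq_den // gt_eqF //= gtr0_norm. Qed.

Definition farey_col_spec (r : rat) (bd : int * int) : bool :=
  (numq r * bd.2 - bd.1 * denq r == 1) && (0 <= bd.2 < denq r).

Lemma farey_col_exists r : exists bd, farey_col_spec r bd.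
Proof.
have cop : coprimez (numq r) (denq r) by rewrite coprimezE; exact: coprime_num_den.
have [u [v]] := Bezoutz (numq r) (denq r); rewrite (eqP cop) => Huv.
exists (- v - numq r * (u %/ denq r)%Z, (u %% denq r)%Z).
apply/andP; split; last by rewrite modz_ge0 ?ltz_pmod ?denq_neq0 ?denq_gt0.
have E := divz_eq u (denq r).
set m := (u %% _)%Z in E *; set q := (u %/ _)%Z in E *.
by rewrite -Huv E /=; apply/eqP; ring.
Qed.

Definition farey_col r : int * int := xchoose (farey_col_exists r).

Definition farey_mat r : mat := (numq r, (farey_col r).1, denq r, (farey_col r).2).
Definition gam r : PSL2Z := pmat (farey_mat r).
Definition parent r : P1Q := mact_zero (farey_mat r).
Definition height (x : P1Q) : nat := if x is Some r then `|denq r|%N else 0.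

Lemma farey_colP r :
  numq r * (farey_col r).2 - (farey_col r).1 * denq r = 1 /\ 0 <= (farey_col r).2 < denq r.
Proof. by have /andP [/eqP] := xchooseP (farey_col_exists r). Qed.

Lemma farey_mat_det r : mdet (farey_mat r) = 1.
Proof. by have [<- _] := farey_colP r. Qed.

Lemma farey_matE (a b c d : int) : a * d - b * c = 1 -> 0 <= d < c ->
  farey_mat (a%:Q / c%:Q) = (a, b, c, d).
Proof.
move=> D /andP [d0 dc]; have c0 : 0 < c by lia.
have cop := coprime_det D.
rewrite /farey_mat numq_frac // denq_frac //.
have [] := farey_colP (a%:Q / c%:Q); rewrite numq_frac // denq_frac //.
case: (farey_col _) => b' d' /= D' /andP [d'0 d'c].
(* Both columns [(b, d)] and [(b', d')] complete [(a, c)] to a matrix of determinant 1,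
   so they differ by [k (a, c)]; the bounds on [d] and [d'] force [k = 0]. *)
set k := d' * b - b' * d.
have ed : d = d' + k * c by rewrite /k; nia.
have eb : b = b' + k * a by rewrite /k; nia.
have k0 : k = 0 by nia.
by rewrite ed eb k0 !mul0r !addr0.
Qed.

Lemma act_inf_gam r : act_inf (gam r) = Some r.
Proof. by rewrite act_inf_pmat ?farey_mat_det //= gt_eqF ?denq_gt0 // divq_num_den. Qed.

Lemma act_zero_gam r : act_zero (gam r) = parent r.
Proof. by rewrite act_zero_pmat ?farey_mat_det. Qed.

Lemma height_parent r : (height (parent r) < height (Some r))%N.
Proof.
have [D /andP [d0 dq]] := farey_colP r; rewrite /parent /farey_mat /=.
case: ifPn => [_ | dn0] /=; first by have := denq_gt0 r; lia.
have cop : coprime `|(farey_col r).1| `|(farey_col r).2|.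
  rewrite -coprimezE; apply/coprimezP; exists (- denq r, numq r) => /=; rewrite -D; ring.
by rewrite denq_frac //; lia.
Qed.

Section FareySum.
Variable E : PSL2Z -> ZG2.

Fixpoint farey_sum_rec (n : nat) (x : P1Q) : ZG2 :=
  match n, x with
  | n'.+1, Some r => farey_sum_rec n' (parent r) ++ E (gam r)
  | _, _ => [::]
  end.

Definition farey_sum (x : P1Q) : ZG2 := farey_sum_rec (height x).+1 x.

Lemma farey_sum_recS n r : farey_sum_rec n.+1 (Some r) = farey_sum_rec n (parent r) ++ E (gam r).
Proof. by []. Qed.

Lemma farey_sum_rec_stable n n' x : (height x < n)%N -> (height x < n')%N ->
  farey_sum_rec n x = farey_sum_rec n' x.
Proof.
elim: n n' x => [|n IH] [|n'] [r|] // hn hn'.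
by rewrite !farey_sum_recS; congr (_ ++ _); apply: IH; have := height_parent r; lia.
Qed.

Lemma farey_sum_Some r : farey_sum (Some r) = farey_sum (parent r) ++ E (gam r).
Proof.
rewrite /farey_sum farey_sum_recS; congr (_ ++ _).
by apply: farey_sum_rec_stable => //; have := height_parent r; lia.
Qed.

End FareySum.

Section FareyReduction.
Variables (gs : seq ZG2) (E : PSL2Z -> ZG2).
Hypothesis E_S : forall g, in_left_ideal gs (E g ++ E (pmul g Smat)).
Hypothesis E_U : forall g, in_left_ideal gs (E g ++ E (pmul g Umat) ++ E (pmul g U2)).

Local Notation psi := (farey_sum E).
Local Notation reduced g := (eqmod gs (E g) (psi (act_inf g) ++ zopp (psi (act_zero g)))).

Lemma reduced_gam r : reduced (gam r).
Proof. by rewrite act_inf_gam act_zero_gam farey_sum_Some; apply: eqmod_zg; zg_ring. Qed.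

Lemma reduced_S g : reduced (pmul g Smat) -> reduced g.
Proof.
rewrite act_inf_S act_zero_S => H.
by apply: ideal_eq (idealD (E_S g) (idealZ (-1) H)); zg_ring.
Qed.

Lemma reduced_T (b : int) : reduced (pmat (1, b, 0, 1)).
Proof.
have Db : mdet (b, -1, 1, 0) = 1 by rewrite /=; ring.
have ST : pmul (pmat (b, -1, 1, 0)) Smat = pmat (1, b, 0, 1).
  by rewrite /Smat pmulE // mmulS -[RHS]pmatN /= oppr0.
rewrite act_inf_pmat ?act_zero_pmat ?mdet_upper //= farey_sum_Some.
rewrite /parent /gam (@farey_matE b (-1) 1 0 Db) //.
by apply: ideal_eq (E_S (pmat (b, -1, 1, 0))); rewrite ST; zg_ring.
Qed.

Lemma reduced_step (a b c d : int) : a * d - b * c = 1 -> 0 < c -> - c <= d < c ->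
  (forall a' b' c' d', a' * d' - b' * c' = 1 -> (`|c'| + `|d'| < `|c| + `|d|)%N ->
     reduced (pmat (a', b', c', d'))) ->
  reduced (pmat (a, b, c, d)).
Proof.
move=> D c0 /andP [cd dc] IH.
have [d0 | dneg] := leP 0 d.
  have <- : gam (a%:Q / c%:Q) = pmat (a, b, c, d).
    by rewrite /gam (@farey_matE a b c d) // d0 dc.
  exact: reduced_gam.
set g := pmat (a, b, c, d); set r := a%:Q / c%:Q.
(* [gam r = g T], hence [g U^2 = gam r S]. *)
have Dgam : mdet (a, b + a, c, d + c) = 1 by apply: etrans D; rewrite /=; ring.
have Dr : farey_mat r = (a, b + a, c, d + c) by apply: farey_matE => //; lia.
have gU : pmul g Umat = pmat (b, - (a + b), d, - (c + d)).
  by rewrite /g /Umat pmulE // mmulU -[RHS]pmatN /= !opprK.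
have gU2 : pmul g U2 = pmul (gam r) Smat.
  rewrite /g /gam Dr U2E /Smat !pmulE //.
  by rewrite mmulU2 mmulS -[RHS]pmatN /=; congr pmat; congr (_, _, _, _); ring.
have : reduced (pmul g Umat) by rewrite gU; apply: IH; [apply: etrans D; ring | lia].
have parent_r : act_one g = parent r.
  by rewrite act_one_pmat // /parent Dr /= [d + c]addrC [b + a]addrC.
have inf_g : act_inf g = Some r by rewrite act_inf_pmat //= gt_eqF.
rewrite act_inf_U act_zero_U parent_r inf_g farey_sum_Some => H.
have := E_U g; rewrite gU2 => HU.
(* The U-relation at [g] and the S-relation at [gam r] give [E g = E (gam r) - E (g U)]. *)
by apply: ideal_eq (idealD (idealD HU (idealZ (-1) H)) (idealZ (-1) (E_S (gam r)))); zg_ring.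
Qed.

Lemma reduced_nonneg n :
  (forall a b c d, a * d - b * c = 1 -> (`|c| + `|d| < n)%N -> reduced (pmat (a, b, c, d))) ->
  forall a b c d, a * d - b * c = 1 -> (`|c| + `|d| <= n)%N -> 0 <= c ->
  reduced (pmat (a, b, c, d)).
Proof.
move=> IH a b c d D hn; rewrite le0r => /orP [/eqP c0 | cpos].
  move: D; rewrite c0 mulr0 subr0 => /mulz_eq1 [[-> ->] | [-> ->]]; first exact: reduced_T.
  by rewrite -pmatN /= !opprK oppr0; exact: reduced_T.
have IH' a' b' c' d' : a' * d' - b' * c' = 1 -> (`|c'| + `|d'| < `|c| + `|d|)%N ->
    reduced (pmat (a', b', c', d')).
  by move=> D' h; apply: IH => //; lia.
have [dc | cd] := ltP d c.
  have [cd | dc'] := leP (- c) d; first by apply: reduced_step => //; rewrite cd.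
  apply: reduced_S; rewrite /Smat pmulE // mmulS -pmatN /=.
  apply: reduced_step; [apply: etrans D; ring | lia | lia | move=> *; apply: IH'; lia].
apply: reduced_S; rewrite /Smat pmulE // mmulS.
apply: reduced_step; [apply: etrans D; ring | lia | lia | move=> *; apply: IH'; lia].
Qed.

Lemma reduced_pmat n (a b c d : int) : a * d - b * c = 1 -> (`|c| + `|d| < n)%N ->
  reduced (pmat (a, b, c, d)).
Proof.
elim: n a b c d => [|n IH] a b c d D hn; first lia.
have [c0 | cneg] := leP 0 c; first by apply: (reduced_nonneg IH) => //; lia.
rewrite -pmatN; apply: (reduced_nonneg IH) => /=; [apply: etrans D; ring | lia | lia].
Qed.

Theorem farey_reduction g : reduced g.
Proof. by elim/pmat_ind: g => a b c d D; apply: (@reduced_pmat (`|c| + `|d|).+1). Qed.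

End FareyReduction.

(** * The ideals I_H, I_V and I_D *)

Lemma sum_zg_mul (w : G2 -> int) r l :
  \sum_(e <- zg_mul r l) e.1 * w e.2 =
  \sum_(e <- r) e.1 * \sum_(f <- l) f.1 * w (pmul e.2.1 f.2.1, pmul e.2.2 f.2.2).
Proof.
elim: r => [|e r IH]; first by rewrite !big_nil.
rewrite /zg_mul /= -/(zg_mul r l) big_cat IH big_cons big_map big_distrr; congr (_ + _).
by apply: eq_bigr => f _ /=; ring.
Qed.

Lemma sum_left_ideal_eq0 (gs : seq ZG2) (w : G2 -> int) (l : ZG2) :
  (forall t, t \in gs -> forall y : G2,
     \sum_(f <- t) f.1 * w (pmul y.1 f.2.1, pmul y.2 f.2.2) = 0) ->
  in_left_ideal gs l -> \sum_(e <- l) e.1 * w e.2 = 0.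
Proof.
move=> Hgs [rs [_ E]]; rewrite (sum_zg_eq w E) /lcomb.
elim: gs rs Hgs {E} => [|t gs IH] [|r rs] Hgs //=; rewrite ?big_nil //.
rewrite big_cat IH => [|t' t'in]; last by apply: Hgs; rewrite inE t'in orbT.
rewrite Monoid.mulm1 sum_zg_mul big1_seq // => e _.
by rewrite (Hgs t (mem_head _ _)) mulr0.
Qed.

Lemma sum_cond_left_ideal_eq0 (gs : seq ZG2) (P : pred G2) (w : G2 -> int) (l : ZG2) :
  (forall t, t \in gs -> forall y : G2, \sum_(f <- t) f.1 *
     (let z := (pmul y.1 f.2.1, pmul y.2 f.2.2) in if P z then w z else 0) = 0) ->
  in_left_ideal gs l -> \sum_(e <- l | P e.2) e.1 * w e.2 = 0.
Proof.
move=> Ht Hl; rewrite big_mkcond.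
rewrite -[RHS](@sum_left_ideal_eq0 gs (fun z => if P z then w z else 0) l Ht Hl).
by apply: eq_bigr => e _; case: ifP; rewrite ?mulr0.
Qed.

Lemma genH_sub_IH l : in_left_ideal genH l -> in_IH l.
Proof.
move=> Hl C x.
apply: (@sum_cond_left_ideal_eq0 _ (fun y => inGinf (pmul (pinv C) y.2))
  (fun y => bdry y.1 x) _ _ Hl) => t; rewrite !inE => /or3P [] /eqP -> [y1 y2];
  rewrite !big_cons big_nil /= ?pmulg1.
- by case: ifP => _; rewrite ?addr0 // -(bdry_S y1 x); ring.
- by case: ifP => _; rewrite ?addr0 // -(bdry_U y1 x); ring.
- by rewrite !inGinf_coset act_inf_T; case: ifP => _; ring.
Qed.

Lemma genV_sub_IV l : in_left_ideal genV l -> in_IV l.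
Proof.
move=> Hl C x.
apply: (@sum_cond_left_ideal_eq0 _ (fun y => inG0 (pmul (pinv C) y.1))
  (fun y => bdry y.2 x) _ _ Hl) => t; rewrite !inE => /or3P [] /eqP -> [y1 y2];
  rewrite !big_cons big_nil /= ?pmulg1.
- by case: ifP => _; rewrite ?addr0 // -(bdry_S y2 x); ring.
- by case: ifP => _; rewrite ?addr0 // -(bdry_U y2 x); ring.
- by rewrite !inG0_coset act_zero_US; case: ifP => _; ring.
Qed.

Lemma genD_sub_ID l : in_left_ideal genD l -> in_ID l.
Proof.
move=> Hl k x.
apply: (@sum_cond_left_ideal_eq0 _ (fun y => pmul y.2 (pinv y.1) == k)
  (fun y => bdry y.1 x) _ _ Hl) => t; rewrite !inE => /orP [] /eqP -> [y1 y2];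
  rewrite !big_cons big_nil /= ?pmulg1 !pmulKV.
- by case: ifP => _; rewrite ?addr0 // -(bdry_S y1 x); ring.
- by case: ifP => _; rewrite ?addr0 // -(bdry_U y1 x); ring.
Qed.

Lemma sum_bdry (K : eqType) (s : seq (P1Q * K)) (f : P1Q * K -> int) g k :
  uniq s -> (act_inf g, k) \in s -> (act_zero g, k) \in s ->
  f (act_inf g, k) - f (act_zero g, k) =
  \sum_(p <- s) (if p.2 == k then bdry g p.1 else 0) * f p.
Proof.
move=> us inf_s zero_s.
have pick q : q \in s -> \sum_(p <- s) (if p == q then f p else 0) = f q.
  by move=> qs; rewrite (bigD1_seq q) //= eqxx big1 ?addr0 // => p /negbTE ->.
rewrite -(pick _ inf_s) -(pick _ zero_s) -sumrB; apply: eq_bigr => -[x k'] _.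
rewrite /bdry !xpair_eqE /= [x == act_inf g]eq_sym [x == act_zero g]eq_sym.
by case: (k' == k); case: (act_inf g == x); case: (act_zero g == x); rewrite /=; ring.
Qed.

Lemma flatten_bdry_eq0 (K : eqType) (sel : G2 -> PSL2Z) (key : G2 -> K)
    (F : P1Q -> K -> ZG2) (l : ZG2) :
  (forall k x, \sum_(e <- l | key e.2 == k) e.1 * bdry (sel e.2) x = 0) ->
  zg_eq (flatten [seq zscale e.1 (F (act_inf (sel e.2)) (key e.2)
                                  ++ zopp (F (act_zero (sel e.2)) (key e.2))) | e <- l]) [::].
Proof.
move=> H z; rewrite coefZG_flatten coefZG_nil big_map.
set s := undup ([seq (act_inf (sel e.2), key e.2) | e <- l]
             ++ [seq (act_zero (sel e.2), key e.2) | e <- l]).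
pose f p := coef (F p.1 p.2) z.
have step e : e \in l -> coef (zscale e.1 (F (act_inf (sel e.2)) (key e.2)
                                ++ zopp (F (act_zero (sel e.2)) (key e.2)))) z =
    \sum_(p <- s) e.1 * ((if p.2 == key e.2 then bdry (sel e.2) p.1 else 0) * f p).
  move=> el; rewrite coefZG_scale coefZG_cat coefZG_scale mulN1r -big_distrr /=; congr (_ * _).
  by apply: sum_bdry; rewrite ?undup_uniq // mem_undup mem_cat map_f ?orbT.
rewrite (eq_big_seq _ step) exchange_big /= big1 // => p _.
have := H p.2 p.1; rewrite big_mkcond /= => Hp.
transitivity (f p * \sum_(e <- l) (if key e.2 == p.2 then e.1 * bdry (sel e.2) p.1 else 0)).
  by rewrite big_distrr /=; apply: eq_bigr => e _; rewrite (eq_sym p.2); case: ifP => _; ring.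
by rewrite Hp mulr0.
Qed.

Section Sufficiency.
Variable gs : seq ZG2.

Lemma ideal_of_bdry (K : eqType) (sel : G2 -> PSL2Z) (key : G2 -> K)
    (F : P1Q -> K -> ZG2) (l : ZG2) :
  (forall k x, \sum_(e <- l | key e.2 == k) e.1 * bdry (sel e.2) x = 0) ->
  (forall y : G2, eqmod gs [:: (1, y)]
     (F (act_inf (sel y)) (key y) ++ zopp (F (act_zero (sel y)) (key y)))) ->
  in_left_ideal gs l.
Proof.
move=> Hl Hy; apply: eqmod0; apply: (eqmod_trans _ (eqmod_zg gs (flatten_bdry_eq0 F Hl))).
elim: l {Hl} => [|[k y] l IH] /=; first exact: eqmod_zg.
have -> : (k, y) :: l = [:: (k, y)] ++ l by [].
apply: eqmod_cat IH; apply: eqmod_trans (eqmod_scale k (Hy y)).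
by apply: eqmod_zg => x; rewrite coefZG_scale !coefZG_cons !coefZG_nil /=; case: ifP => _; ring.
Qed.

Lemma eqmod_pexpz (F : PSL2Z -> ZG2) h :
  (forall g, eqmod gs (F g) (F (pmul g h))) ->
  forall g n, eqmod gs (F (pmul g (pexpz h n))) (F g).
Proof.
have pow h' : (forall g, eqmod gs (F g) (F (pmul g h'))) ->
    forall g k, eqmod gs (F (pmul g (pexpn h' k))) (F g).
  move=> step g k; elim: k g => [|k IH] g /=; first by rewrite pmulg1; exact: eqmod_zg.
  by rewrite pmulA; apply: eqmod_trans (IH _) (eqmod_sym (step g)).
move=> step g [k|k]; apply: pow => // {}g.
by have := step (pmul g (pinv h)); rewrite -pmulA pmulVg pmulg1; exact: eqmod_sym.
Qed.

End Sufficiency.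

Definition cusp_rep (x : P1Q) : PSL2Z := if x is Some r then gam r else pone.

Lemma act_inf_cusp_rep x : act_inf (cusp_rep x) = x.
Proof. by case: x => [r|] /=; [exact: act_inf_gam | rewrite pone_pmat act_inf_pmat]. Qed.

Lemma genH_S a b : in_left_ideal genH [:: (1, (a, b)); (1, (pmul a Smat, b))].
Proof. by exists [:: [:: (1, (a, b))]; [::]; [::]]; split=> // x; rewrite /= !pmulg1. Qed.

Lemma genH_U a b :
  in_left_ideal genH [:: (1, (a, b)); (1, (pmul a Umat, b)); (1, (pmul a U2, b))].
Proof. by exists [:: [::]; [:: (1, (a, b))]; [::]]; split=> // x; rewrite /= !pmulg1. Qed.

Lemma genH_T a b : in_left_ideal genH [:: (1, (a, b)); (-1, (a, pmul b Tmat))].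
Proof. by exists [:: [::]; [::]; [:: (1, (a, b))]]; split=> // x; rewrite /= !pmulg1 mulr1. Qed.

Lemma genV_S a b : in_left_ideal genV [:: (1, (a, b)); (1, (a, pmul b Smat))].
Proof. by exists [:: [:: (1, (a, b))]; [::]; [::]]; split=> // x; rewrite /= !pmulg1. Qed.

Lemma genV_U a b :
  in_left_ideal genV [:: (1, (a, b)); (1, (a, pmul b Umat)); (1, (a, pmul b U2))].
Proof. by exists [:: [::]; [:: (1, (a, b))]; [::]]; split=> // x; rewrite /= !pmulg1. Qed.

Lemma genV_US a b : in_left_ideal genV [:: (1, (a, b)); (-1, (pmul a USmat, b))].
Proof. by exists [:: [::]; [::]; [:: (1, (a, b))]]; split=> // x; rewrite /= !pmulg1 mulr1. Qed.

Lemma genD_S a b : in_left_ideal genD [:: (1, (a, b)); (1, (pmul a Smat, pmul b Smat))].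
Proof. by exists [:: [:: (1, (a, b))]; [::]]; split=> // x; rewrite /= !pmulg1. Qed.

Lemma genD_U a b : in_left_ideal genD
  [:: (1, (a, b)); (1, (pmul a Umat, pmul b Umat)); (1, (pmul a U2, pmul b U2))].
Proof. by exists [:: [::]; [:: (1, (a, b))]]; split=> // x; rewrite /= !pmulg1. Qed.

Lemma IH_sub_genH l : in_IH l -> in_left_ideal genH l.
Proof.
move=> Hl; pose E x g : ZG2 := [:: (1, (g, cusp_rep x))].
apply: (@ideal_of_bdry _ _ fst (fun y => act_inf y.2) (fun x k => farey_sum (E k) x)).
  move=> k x; rewrite -[RHS](Hl (cusp_rep k) x); apply: eq_bigl => e.
  by rewrite inGinf_coset act_inf_cusp_rep.
move=> [a b] /=; have [n {1}->] := coset_inf (esym (act_inf_cusp_rep (act_inf b))).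
apply: (eqmod_trans _ (@farey_reduction _ (E _) (genH_S^~ _) (genH_U^~ _) a)).
apply: (eqmod_pexpz (F := fun g => [:: (1, (a, g))])) => g.
by apply: ideal_eq (genH_T a g); zg_ring.
Qed.

Lemma IV_sub_genV l : in_IV l -> in_left_ideal genV l.
Proof.
move=> Hl; pose E x g : ZG2 := [:: (1, (pmul (cusp_rep x) Smat, g))].
apply: (@ideal_of_bdry _ _ snd (fun y => act_zero y.1) (fun x k => farey_sum (E k) x)).
  move=> k x; rewrite -[RHS](Hl (pmul (cusp_rep k) Smat) x); apply: eq_bigl => e.
  by rewrite inG0_coset act_zero_S act_inf_cusp_rep.
move=> [a b] /=.
have [n {1}->] := coset_zero (esym (etrans (act_zero_S _) (act_inf_cusp_rep (act_zero a)))).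
apply: (eqmod_trans _ (@farey_reduction _ (E _) (genV_S _) (genV_U _) b)).
apply: (eqmod_pexpz (F := fun g => [:: (1, (g, b))])) => g.
by apply: ideal_eq (genV_US g b); zg_ring.
Qed.

Lemma ID_sub_genD l : in_ID l -> in_left_ideal genD l.
Proof.
move=> Hl; pose E k g : ZG2 := [:: (1, (g, pmul k g))].
apply: (@ideal_of_bdry _ _ fst (fun y => pmul y.2 (pinv y.1)) (fun x k => farey_sum (E k) x)).
  exact: Hl.
move=> [a b] /=.
have E_S k g : in_left_ideal genD (E k g ++ E k (pmul g Smat)).
  by rewrite /E (pmulA k g Smat); exact: genD_S.
have E_U k g : in_left_ideal genD (E k g ++ E k (pmul g Umat) ++ E k (pmul g U2)).
  by rewrite /E (pmulA k g Umat) (pmulA k g U2); exact: genD_U.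
apply: (eqmod_trans _ (farey_reduction (E_S _) (E_U _) a)).
by apply: eqmod_zg; rewrite /E -pmulA pmulVg pmulg1.
Qed.

Theorem mainTheorem5 :
  (forall l : ZG2, in_IH l <-> in_left_ideal genH l) /\
  (forall l : ZG2, in_IV l <-> in_left_ideal genV l) /\
  (forall l : ZG2, in_ID l <-> in_left_ideal genD l).
Proof.
split; [|split] => l; split.
- exact: IH_sub_genH.
- exact: genH_sub_IH.
- exact: IV_sub_genV.
- exact: genV_sub_IV.
- exact: ID_sub_genD.
- exact: genD_sub_ID.
Qed.
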